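(* Let $q$ be a prime power, $e\ge 2$, $r$ a positive integer, $a\in\mathbb{F}_{q^e}$ with $a\neq 0$, $f(x)=x^r(x^{q-1}+a)\in\mathbb{F}_{q^e}[x]$, and $\ell=q^{e-1}+\cdots+q+1$. Then $f(x)$ permutes $\mathbb{F}_{q^e}$ and is the composition of a linearized binomial and a monomial if and only if $(-a)^{\ell}\neq 1$ and $r\equiv s\ell+\sum_{i=0}^{k-1}q^{hi}\pmod{q^e-1}$, where $h$ is a positive integer with $\gcd(h,e)=1$, $k$ is a positive integer whose reduction modulo $e$ is the inverse of $h$ modulo $e$, $s$ is a positive integer, and $\gcd(r,q-1)=1$.
   Context: A polynomial permutes $\mathbb{F}_{q^e}$ if it induces a bijection of $\mathbb{F}_{q^e}$. ''$f$ is the composition of a linearized binomial and a monomial'' means $f(x)\equiv L(x^n)\pmod{x^{q^e}-x}$ for some monomial $x^n$ and some linearized binomial $L(x)=bx^{q^m}+cx^{q^{m'}}$ with coefficients in $\mathbb{F}_{q^e}$. *)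

From HB Require Import structures.
From mathcomp Require Import all_boot all_order all_algebra all_field.
Set Implicit Arguments. Unset Strict Implicit. Unset Printing Implicit Defensive.
Import GRing.Theory.
Local Open Scope ring_scope.

Definition prime_power (q : nat) : Prop :=
  exists p n : nat, prime p /\ (0 < n)%N /\ q = (p ^ n)%N.

Definition fpoly (F : finFieldType) (q r : nat) (a : F) : {poly F} :=
  'X^r * ('X^(q.-1) + a%:P).

Definition permutes (F : finFieldType) (p : {poly F}) : Prop :=
  bijective (fun x : F => p.[x]).

Definition lin_binomial (F : finFieldType) (q m m' : nat) (b c : F) : {poly F} :=
  b *: 'X^(q ^ m) + c *: 'X^(q ^ m').

Definition lin_binom_comp_monomial (F : finFieldType) (q e : nat) (f : {poly F}) : Prop :=
  exists (n m m' : nat) (b c : F),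
    f %% ('X^(q ^ e) - 'X) = (lin_binomial q m m' b c \Po 'X^n) %% ('X^(q ^ e) - 'X).

(* Write N = q^e - 1, so that l = N / (q - 1).  Modulo x^(q^e) - x the polynomial f is
   x^(r+q-1) + a x^r, a composition L(x^n) is b x^(n q^m) + c x^(n q^m'), and x |-> x^n
   permutes F_(q^e) iff gcd(n, N) = 1.  Comparing exponents modulo N, f has the required shape
   iff gcd(r, N) = 1 and r q^h = r + (q - 1) (mod N) for some h, and then
   f = (y^(q^h) + a y) o x^r on F_(q^e).  This additive map has a nonzero kernel element z iff
   z^(q^h - 1) = -a, which forces (-a)^l = 1; conversely if (-a)^l = 1 then -a = z^(q-1)
   and f(z) = 0 = f(0).
   Dividing by q - 1, the congruence reads r (1 + q + ... + q^(h-1)) = 1 (mod l).  It forces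
   gcd(h, e) = 1, and if k h = 1 (mod e) the inverse of 1 + q + ... + q^(h-1) modulo l is
   sum_(i<k) q^(h i), which yields the stated form of r. *)

From HB Require Import structures.
From mathcomp Require Import all_boot all_order all_algebra all_field.
From mathcomp Require Import cyclic.
Import GRing.Theory.

Set Implicit Arguments.
Unset Strict Implicit.
Unset Printing Implicit Defensive.

Definition exponent_form (q e r : nat) : Prop :=
  exists h k s : nat,
    [/\ (0 < h) /\ coprime h e, (0 < k) /\ (k * h = 1 %[mod e]), (0 < s) &
        (r = s * \sum_(i < e) q ^ i + \sum_(i < k) q ^ (h * i) %[mod q ^ e - 1])].

Lemma expn_sub1 q k : q ^ k - 1 = (q - 1) * \sum_(i < k) q ^ i.
Proof. by rewrite !subn1 predn_exp. Qed.

Lemma expn_eq_mod_pred q e i j :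
  0 < q -> i = j %[mod e] -> q ^ i = q ^ j %[mod q ^ e - 1].
Proof.
move=> q_gt0 eq_ij.
have qe_1 : q ^ e = 1 %[mod q ^ e - 1].
  by rewrite -{1}(subnK (_ : 0 < q ^ e)) ?expn_gt0 ?q_gt0 // modnDl.
have exp_mod k : q ^ k = q ^ (k %% e) %[mod q ^ e - 1].
  rewrite {1}(divn_eq k e) expnD (mulnC (k %/ e)) expnM -modnMml -modnXm qe_1.
  by rewrite modnXm exp1n modnMml mul1n.
by rewrite exp_mod eq_ij -exp_mod.
Qed.

Lemma coprime_expn_sub1 q e : 0 < q -> 0 < e -> coprime q (q ^ e - 1).
Proof.
move=> q_gt0 e_gt0; rewrite coprime_sym -(coprime_pexpr _ _ e_gt0).
by rewrite -{2}(@prednK (q ^ e)) ?expn_gt0 ?q_gt0 // subn1 coprimenS.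
Qed.

Lemma ltn_pred_expn q d : 1 < q -> 1 < d -> q - 1 < q ^ d - 1.
Proof.
move=> q_gt1 d_gt1; have lt_q : q < q ^ d by rewrite -{1}(expn1 q) ltn_exp2l.
exact: ltn_sub2r (ltn_trans q_gt1 lt_q) lt_q.
Qed.

Lemma eq_mod_lift l N r S : 0 < N -> l %| N -> r = S %[mod l] ->
  exists2 s, 0 < s & r = s * l + S %[mod N].
Proof.
move=> N_gt0 dvd_lN eq_rS; have l_gt0 := dvdn_gt0 N_gt0 dvd_lN.
have le_S : S <= r + S * N.
  by rewrite (leq_trans (leq_pmulr _ N_gt0)) ?leq_addl.
have dvd_l : l %| r + S * N - S.
  by rewrite -eqn_mod_dvd // -(divnK dvd_lN) mulnA addnC modnMDl; apply/eqP.
exists ((r + S * N - S) %/ l + N %/ l).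
  by rewrite ltn_addl // divn_gt0 // dvdn_leq.
by rewrite mulnDl !divnK // addnAC subnK // -addnA -mulSnr addnC modnMDl.
Qed.

Section ExponentShift.
Variables q e : nat.
Hypotheses (q_gt1 : 1 < q) (e_gt1 : 1 < e).
Local Notation N := (q ^ e - 1).
Local Notation l := (\sum_(i < e) q ^ i).

Let q_gt0 : 0 < q. Proof. exact: ltnW. Qed.
Let e_gt0 : 0 < e. Proof. exact: ltnW. Qed.

Lemma eq_mod_mul_pred x y : (q - 1) * x = (q - 1) * y %[mod N] <-> x = y %[mod l].
Proof.
rewrite expn_sub1 -!muln_modr; split=> [/eqP|-> //].
by rewrite eqn_pmul2l ?subn_gt0 // => /eqP.
Qed.

Lemma exp_shiftE r h :
  r * q ^ h = r + (q - 1) %[mod N] <-> r * \sum_(i < h) q ^ i = 1 %[mod l].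
Proof.
apply: (iff_trans _ (eq_mod_mul_pred _ _)); rewrite mulnCA -expn_sub1 muln1.
have -> : r * q ^ h = r * (q ^ h - 1) + r.
  by rewrite mulnBr muln1 subnK // leq_pmulr // expn_gt0 q_gt0.
rewrite [r + _]addnC; split=> [/eqP|eq_h]; first by rewrite eqn_modDr => /eqP.
by rewrite -modnDml eq_h modnDml.
Qed.

Lemma sum_expnM_inverse h k : k * h = 1 %[mod e] ->
  (\sum_(i < k) q ^ (h * i)) * \sum_(i < h) q ^ i = 1 %[mod l].
Proof.
move=> eq_kh; apply/eq_mod_mul_pred; rewrite mulnCA -expn_sub1 muln1 mulnC.
rewrite (eq_bigr (fun i : 'I_k => (q ^ h) ^ i)) => [|i _]; last by rewrite expnM.
have : q ^ (h * k) = q ^ 1 %[mod N].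
  by apply: expn_eq_mod_pred q_gt0 _; rewrite mulnC.
rewrite -expn_sub1 -expnM expn1 => /eqP eq_hk; apply/eqP.
by rewrite -(eqn_modDr 1) !subnK ?expn_gt0 ?q_gt0.
Qed.

Lemma coprime_of_exp_shift r t : r * q ^ t = r + (q - 1) %[mod N] -> coprime t e.
Proof.
move=> shift; set d := gcdn t e.
have dvd_sub1 j : d %| j -> q ^ d - 1 %| q ^ j - 1.
  by case/dvdnP=> c ->; rewrite mulnC expnM !subn1 dvdn_pred_predX.
have dvd_dN : q ^ d - 1 %| N by apply: dvd_sub1; apply: dvdn_gcdr.
have dvd_d_q : q ^ d - 1 %| q - 1.
  have /dvdnP[c eq_c] : q ^ d - 1 %| q ^ t - 1 by apply: dvd_sub1; apply: dvdn_gcdl.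
  have : r * q ^ t = r + (q - 1) %[mod q ^ d - 1].
    by rewrite -(modn_dvdm _ dvd_dN) shift (modn_dvdm _ dvd_dN).
  have -> : r * q ^ t = r * c * (q ^ d - 1) + r.
    by rewrite -mulnA -eq_c mulnBr muln1 subnK // leq_pmulr // expn_gt0 q_gt0.
  by rewrite modnMDl -{1}[r]addn0 => /eqP; rewrite eqn_modDl mod0n eq_sym.
have d_gt0 : 0 < d by rewrite gcdn_gt0 e_gt0 orbT.
rewrite /coprime -/d eqn_leq d_gt0 andbT leqNgt; apply/negP => d_gt1.
have q1_gt0 : 0 < q - 1 by rewrite subn_gt0.
by have := dvdn_leq q1_gt0 dvd_d_q; rewrite leqNgt ltn_pred_expn.
Qed.

Let N_gt0 : 0 < N. Proof. exact: leq_ltn_trans (leq0n _) (ltn_pred_expn q_gt1 e_gt1). Qed.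
Let dvd_lN : l %| N. Proof. by rewrite expn_sub1 dvdn_mull. Qed.

Lemma exp_shift_of_exponent_pair n m1 m2 r : coprime n N ->
    n * q ^ m1 = r + (q - 1) %[mod N] -> n * q ^ m2 = r %[mod N] ->
  r * q ^ (m1 + m2 * (e - 1)) = r + (q - 1) %[mod N] /\ coprime r N.
Proof.
move=> co_nN eq1 eq2; split.
  have eq_e : m2 + (m1 + m2 * (e - 1)) = m1 %[mod e].
    by rewrite addnCA [m2 + _]addnC -mulnSr subn1 prednK // addnC modnMDl.
  rewrite -modnMml -eq2 modnMml -mulnA -expnD -modnMmr.
  by rewrite (expn_eq_mod_pred q_gt0 eq_e) modnMmr eq1.
rewrite -coprime_modl -eq2 coprime_modl coprimeMl co_nN coprimeXl //.
exact: coprime_expn_sub1.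
Qed.

Lemma exponent_form_of_exp_shift r t :
    r * q ^ t = r + (q - 1) %[mod N] -> coprime r N ->
  exponent_form q e r /\ coprime r (q - 1).
Proof.
move=> shift co_rN; split; last by apply: coprime_dvdr co_rN; rewrite expn_sub1 dvdn_mulr.
have co_te := coprime_of_exp_shift shift.
have t_gt0 : 0 < t by case: (posnP t) co_te => [->|//]; rewrite /coprime gcd0n gtn_eqF.
have [k kn eq_k _] := egcdnP e t_gt0; rewrite (eqP co_te) in eq_k.
have k_gt0 : 0 < k by case: (posnP k) eq_k => [->|//]; rewrite mul0n addn1.
have inv_kt : k * t = 1 %[mod e] by rewrite eq_k modnMDl.
have eq_rS : r = \sum_(i < k) q ^ (t * i) %[mod l].
  have /exp_shiftE rP := shift.
  rewrite -[r in LHS]muln1 -modnMmr -(sum_expnM_inverse inv_kt) modnMmr mulnCA mulnC.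
  by rewrite -modnMml rP modnMml mul1n.
have [s s_gt0 eq_r] := eq_mod_lift N_gt0 dvd_lN eq_rS.
by exists t, k, s.
Qed.

Lemma exp_shift_of_exponent_form r : exponent_form q e r -> coprime r (q - 1) ->
  exists2 h, r * q ^ h = r + (q - 1) %[mod N] & coprime r N.
Proof.
move=> [h [k [s [_ [_ inv_kh] _ eq_r]]]] co_rq.
have eq_rS : r = \sum_(i < k) q ^ (h * i) %[mod l].
  by rewrite -(modn_dvdm _ dvd_lN) eq_r (modn_dvdm _ dvd_lN) modnMDl.
have rP : r * \sum_(i < h) q ^ i = 1 %[mod l].
  by rewrite -modnMml eq_rS modnMml sum_expnM_inverse.
exists h; first exact/exp_shiftE.
have : coprime (r * \sum_(i < h) q ^ i) l.
  by rewrite -coprime_modl rP coprime_modl coprime1n.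
by rewrite coprimeMl expn_sub1 coprimeMr co_rq => /andP[-> _].
Qed.

Lemma exp_shiftP r :
  (exists2 h, r * q ^ h = r + (q - 1) %[mod N] & coprime r N) <->
  exponent_form q e r /\ coprime r (q - 1).
Proof.
split=> [[h shift co_rN] | [form co_rq]]; first exact: exponent_form_of_exp_shift shift co_rN.
exact: exp_shift_of_exponent_form.
Qed.

End ExponentShift.

(* The exponent of x^u reduced modulo x^(N+1) - x: the representative of u modulo N in
   [1, N], except that x^0 stays x^0. *)
Definition exp_rep (N u : nat) : nat := if u is u'.+1 then (u' %% N).+1 else 0.

Lemma exp_rep_mod N u : 0 < u -> exp_rep N u = u %[mod N].
Proof. by case: u => // u _; rewrite /= -[(u %% N).+1]addn1 modnDml addn1. Qed.

Lemma exp_rep_inj N u v : 0 < u -> 0 < v -> exp_rep N u = exp_rep N v -> u = v %[mod N].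
Proof. by move=> u_gt0 v_gt0 eq_uv; rewrite -exp_rep_mod // eq_uv exp_rep_mod. Qed.

Local Open Scope ring_scope.

Lemma eq_binomial_exponents (R : nzRingType) (u1 u0 v1 v0 : nat) (a b c : R) :
    u1 != u0 -> a != 0 -> 'X^u1 + a *: 'X^u0 = b *: 'X^v1 + c *: 'X^v0 ->
  (u1 == v1) && (u0 == v0) || (u1 == v0) && (u0 == v1).
Proof.
move=> neq_u a_nz eq_p.
have supp j : ('X^u1 + a *: 'X^u0)`_j != 0 -> (j == v1) || (j == v0).
  rewrite eq_p coefD !coefZ !coefXn; apply: contraR; rewrite negb_or.
  by case/andP=> /negbTE-> /negbTE->; rewrite !mulr0 addr0.
move: (supp u1) (supp u0); rewrite !coefD !coefZ !coefXn !eqxx (negbTE neq_u).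
rewrite [u0 == u1]eq_sym (negbTE neq_u) mulr0 mulr1 addr0 add0r.
move=> /(_ (oner_neq0 _)) v_u1 /(_ a_nz) v_u0.
by move: neq_u; case/orP: v_u1 => /eqP->; case/orP: v_u0 => /eqP->; rewrite ?eqxx ?orbT.
Qed.

Lemma additive_binomial_inj (R : idomainType) n (a : R) :
    [pchar R].-nat n -> (forall z, z != 0 -> z ^+ n.-1 != - a) ->
  injective (fun y : R => y ^+ n + a * y).
Proof.
move=> n_pchar no_root y1 y2 /= eq_y; have /andP[n_gt0 _] := n_pchar.
set z := y1 - y2; have Gz : z ^+ n + a * z = 0.
  by rewrite exprDn_pchar // exprNn_pchar // mulrBr addrACA eq_y -opprD subrr.
apply/eqP; rewrite -subr_eq0 -/z; apply: contraT => z_nz.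
have : z * (z ^+ n.-1 + a) == 0 by rewrite mulrDr -exprS prednK // mulrC Gz.
by rewrite mulf_eq0 (negbTE z_nz) addr_eq0 (negbTE (no_root z z_nz)).
Qed.

Section FiniteFieldPowers.
Variable F : finFieldType.
Local Notation N := #|F|.-1.
Local Notation M := ('X^#|F| - 'X : {poly F}).

Let card_gt0 : (0 < #|F|)%N. Proof. exact: ltnW (finNzRing_gt1 F). Qed.
Let N_gt0 : (0 < N)%N. Proof. by rewrite -subn1 subn_gt0 finNzRing_gt1. Qed.

Lemma expf_card_pred (x : F) : x != 0 -> x ^+ N = 1.
Proof. by move=> x_nz; apply: (mulfI x_nz); rewrite -exprS prednK // expf_card mulr1. Qed.

Lemma expf_eq_mod (x : F) u v :
  (0 < u)%N -> (0 < v)%N -> (u = v %[mod N])%N -> x ^+ u = x ^+ v.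
Proof.
move=> u_gt0 v_gt0 eq_uv; have [->|x_nz] := eqVneq x 0; first by rewrite !expr0n !gtn_eqF.
rewrite (divn_eq u N) (divn_eq v N) eq_uv !exprD ![(_ * N)%N]mulnC !exprM.
by rewrite expf_card_pred // !expr1n.
Qed.

Lemma primitive_root_card : exists g : F, N.-primitive_root g.
Proof.
have : has N.-primitive_root (enum (predC1 (0 : F))).
  apply: has_prim_root N_gt0 _ (enum_uniq _) _; last by rewrite -cardE cardC1.
  by apply/allP => x; rewrite mem_enum unity_rootE => /expf_card_pred->.
by case/hasP => g _; exists g.
Qed.

Lemma expf_injP n : (0 < n)%N -> injective (fun x : F => x ^+ n) <-> coprime n N.
Proof.
move=> n_gt0; split=> [inj_n | co_nN].
  have [g prim_g] := primitive_root_card.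
  have [finv _ finvK] := injF_bij inj_n; set y := finv g; have /= gE := finvK g.
  have g_nz : g != 0 by rewrite (prim_root_eq0 prim_g) gtn_eqF.
  have y_nz : y != 0 by apply: contraNneq g_nz => y0; rewrite -gE -/y y0 expr0n gtn_eqF.
  have [i yE] := prim_rootP prim_g (expf_card_pred y_nz).
  have : g ^+ (i * n) == g ^+ 1 by rewrite exprM -yE -/y gE expr1.
  rewrite (eq_prim_root_expr prim_g) => /eqP eq_in.
  have : coprime (i * n) N by rewrite -coprime_modl eq_in coprime_modl coprime1n.
  by rewrite coprimeMl => /andP[].
have [u v eq_u _] := egcdnP N n_gt0; rewrite (eqP co_nN) in eq_u.
apply: (can_inj (g := fun y => y ^+ u)) => x /=.
rewrite -exprM -[RHS]expr1; apply: expf_eq_mod; rewrite // mulnC eq_u.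
  by rewrite addn1.
by rewrite modnMDl.
Qed.

Lemma expf_root_exists (y : F) d :
  (d %| N)%N -> y ^+ (N %/ d) = 1 -> exists z, z ^+ d = y.
Proof.
move=> dvd_dN y_N; have d_gt0 := dvdn_gt0 N_gt0 dvd_dN.
have Nd_gt0 : (0 < N %/ d)%N by rewrite divn_gt0 // dvdn_leq.
have [g prim_g] := primitive_root_card.
have y_nz : y != 0 by apply: contraNneq (oner_neq0 F) => y0; rewrite -y_N y0 expr0n gtn_eqF.
have [i yE] := prim_rootP prim_g (expf_card_pred y_nz).
have : (N %| i * (N %/ d))%N by rewrite (prim_order_dvd prim_g) exprM -yE y_N.
rewrite -{1}(divnK dvd_dN) mulnC dvdn_pmul2r // => /dvdnP[j eq_i].
by exists (g ^+ j); rewrite -exprM yE eq_i.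
Qed.

Lemma horner_modp_card (p : {poly F}) x : (p %% M).[x] = p.[x].
Proof.
rewrite {2}(divp_eq p M) hornerD hornerM hornerD hornerN hornerXn hornerX.
by rewrite expf_card subrr mulr0 add0r.
Qed.

Lemma modp_card_eqP (p r : {poly F}) : p %% M = r %% M <-> forall x, p.[x] = r.[x].
Proof.
split=> [eq_pr x | eq_pr]; first by rewrite -horner_modp_card eq_pr horner_modp_card.
have dvd_M : M %| p - r.
  rewrite finField_genPoly uniq_roots_dvdp ?uniq_rootsE ?index_enum_uniq //.
  by apply/allP => x _; rewrite rootE hornerD hornerN eq_pr subrr.
by apply/eqP; rewrite -subr_eq0 -modpN -modpD modp_eq0.
Qed.

Lemma size_modp_card : size M = #|F|.+1.
Proof.
by rewrite size_polyDl ?size_polyXn // size_polyN size_polyX ltnS finNzRing_gt1.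
Qed.

Lemma modp_Xn_card u : (0 < u)%N -> 'X^u %% M = 'X^(exp_rep N u).
Proof.
move=> u_gt0; have rep_gt0 : (0 < exp_rep N u)%N by case: u u_gt0.
rewrite -[RHS](@modp_small _ _ M); last first.
  rewrite size_polyXn size_modp_card ltnS -(prednK card_gt0).
  by case: u u_gt0 {rep_gt0} => //= u _; rewrite ltnS ltn_mod.
apply/modp_card_eqP => x; rewrite !hornerXn.
by apply: expf_eq_mod; rewrite // exp_rep_mod.
Qed.

End FiniteFieldPowers.

Lemma prime_power_gt1 q : prime_power q -> (1 < q)%N.
Proof. by case=> p [k [p_pr [k_gt0 ->]]]; rewrite -(exp1n k) ltn_exp2r // prime_gt1. Qed.

Section FpolyLinBinomial.
Variables (F : finFieldType) (q : nat).

Lemma fpolyE r (a : F) : fpoly q r a = 'X^(r + q.-1) + a *: 'X^r.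
Proof. by rewrite /fpoly mulrDr exprD (mulrC _ a%:P) mul_polyC. Qed.

Lemma horner_fpoly r (a x : F) : (fpoly q r a).[x] = x ^+ r * (x ^+ q.-1 + a).
Proof. by rewrite /fpoly hornerM hornerD hornerC !hornerXn. Qed.

Lemma horner_lin_binomial m m' (b c x : F) :
  (lin_binomial q m m' b c).[x] = b * x ^+ (q ^ m) + c * x ^+ (q ^ m').
Proof. by rewrite /lin_binomial hornerD !hornerZ !hornerXn. Qed.

Lemma comp_lin_binomial_Xn m m' (b c : F) n :
  lin_binomial q m m' b c \Po 'X^n = b *: 'X^(n * q ^ m) + c *: 'X^(n * q ^ m').
Proof. by rewrite /lin_binomial comp_polyD !comp_polyZ !comp_Xn_poly -!exprM. Qed.

End FpolyLinBinomial.

Section PermutationBinomial.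
Variables (F : finFieldType) (q e : nat).
Hypotheses (q_gt1 : (1 < q)%N) (e_gt1 : (1 < e)%N) (cardF : #|F| = (q ^ e)%N).
Local Notation N := (q ^ e - 1)%N.
Local Notation l := (\sum_(i < e) q ^ i)%N.

Let card_pred : #|F|.-1 = N. Proof. by rewrite cardF subn1. Qed.

Lemma neg_expr_neq1_of_permutes r (a : F) : (0 < r)%N -> a != 0 ->
  permutes (fpoly q r a) -> (- a) ^+ l != 1.
Proof.
move=> r_gt0 a_nz [finv fK _]; apply/eqP => a_l.
have q1_gt0 : (0 < q - 1)%N by rewrite subn_gt0.
have [z zE] : exists z : F, z ^+ (q - 1) = - a.
  by apply: expf_root_exists; rewrite card_pred expn_sub1 ?dvdn_mulr ?mulKn.
have z_nz : z != 0.
  by apply: contraNneq a_nz => z0; rewrite -oppr_eq0 -zE z0 expr0n gtn_eqF.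
have : (fpoly q r a).[z] = (fpoly q r a).[0].
  by rewrite !horner_fpoly -subn1 zE addNr mulr0 expr0n gtn_eqF ?mul0r.
by move/(can_inj fK)/eqP; rewrite (negbTE z_nz).
Qed.

Lemma exp_shift_of_lin_comp r (a : F) : (0 < r)%N -> a != 0 ->
    permutes (fpoly q r a) -> lin_binom_comp_monomial q e (fpoly q r a) ->
  exists2 h, (r * q ^ h = r + (q - 1) %[mod N])%N & coprime r N.
Proof.
move=> r_gt0 a_nz [finv fK _] [n [m [m' [b [c eq_f]]]]]; rewrite -cardF in eq_f.
have f_eval := (modp_card_eqP _ _).1 eq_f.
have inj_n : injective (fun x : F => x ^+ n).
  by move=> x y eq_xy; apply: (can_inj fK); rewrite /= !f_eval !horner_comp !hornerXn eq_xy.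
have n_gt0 : (0 < n)%N.
  rewrite lt0n; apply: contra_neq (oner_neq0 F) => n0.
  by apply: inj_n; rewrite /= n0 !expr0.
have co_nN : coprime n N by rewrite -card_pred; exact: (expf_injP _ n_gt0).1 inj_n.
have pos_nq k : (0 < n * q ^ k)%N by rewrite muln_gt0 n_gt0 expn_gt0 ltnW.
have pos_r1 : (0 < r + q.-1)%N by rewrite addn_gt0 r_gt0.
have cong u k : exp_rep N u = exp_rep N (n * q ^ k) -> (0 < u)%N ->
    (n * q ^ k = u %[mod N])%N.
  by move=> eq_u u_gt0; rewrite (exp_rep_inj u_gt0 (pos_nq k) eq_u).
have neq_rep : exp_rep N (r + q.-1) != exp_rep N r.
  have q1_gt0 : (0 < q.-1)%N by rewrite -subn1 subn_gt0.
  apply/negP => /eqP/(exp_rep_inj pos_r1 r_gt0)/eqP.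
  rewrite -[r in _ == r %[mod _]]addn0 eqn_modDl mod0n modn_small ?gtn_eqF //.
  by rewrite -subn1 ltn_pred_expn.
suff [m1 [m2 [eq1 eq2]]] : exists m1 m2,
    (n * q ^ m1 = r + q.-1 %[mod N])%N /\ (n * q ^ m2 = r %[mod N])%N.
  rewrite -subn1 in eq1.
  have [shift co_rN] := exp_shift_of_exponent_pair q_gt1 e_gt1 co_nN eq1 eq2.
  by exists (m1 + m2 * (e - 1))%N.
move: eq_f; rewrite fpolyE comp_lin_binomial_Xn !modpD !modpZl.
rewrite !modp_Xn_card // card_pred => /(eq_binomial_exponents neq_rep a_nz).
case/orP=> /andP[/eqP eq1 /eqP eq2].
  by exists m, m'; split; [exact: cong eq1 pos_r1 | exact: cong eq2 r_gt0].
by exists m', m; split; [exact: cong eq1 pos_r1 | exact: cong eq2 r_gt0].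
Qed.

Lemma fpoly_lin_comp_of_exp_shift r h (a : F) : prime_power q -> (0 < r)%N ->
    (- a) ^+ l != 1 -> (r * q ^ h = r + (q - 1) %[mod N])%N -> coprime r N ->
  permutes (fpoly q r a) /\ lin_binom_comp_monomial q e (fpoly q r a).
Proof.
move=> [p [k [p_pr [_ qE]]]] r_gt0 a_l shift co_rN.
have f_eval x : (fpoly q r a).[x] = (x ^+ r) ^+ (q ^ h) + a * x ^+ r.
  rewrite horner_fpoly mulrDr -exprD -exprM [a * _]mulrC; congr (_ + _).
  apply: expf_eq_mod; rewrite ?addn_gt0 ?muln_gt0 ?expn_gt0 ?r_gt0 ?(ltnW q_gt1) //.
  by rewrite card_pred -subn1 shift.
have p_char : p \in [pchar F].
  by apply: (card_finPcharP (n := (k * e)%N)) => //; rewrite cardF qE expnM.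
have G_inj : injective (fun y : F => y ^+ (q ^ h) + a * y).
  apply: additive_binomial_inj => [|z z_nz].
    by rewrite qE -expnM pnatX pnatE // p_char.
  apply: contra_neq a_l => <-; rewrite -exprM.
  have -> : ((q ^ h).-1 * l = #|F|.-1 * \sum_(i < h) q ^ i)%N.
    by rewrite card_pred -subn1 !expn_sub1 mulnAC.
  by rewrite exprM expf_card_pred // expr1n.
have inj_r : injective (fun x : F => x ^+ r).
  by apply/(expf_injP _ r_gt0); rewrite card_pred.
split.
  by apply: injF_bij => x y; rewrite /= !f_eval => /G_inj/inj_r.
exists r, h, 0%N, 1, a; rewrite -cardF; apply/modp_card_eqP => x.
by rewrite f_eval horner_comp hornerXn horner_lin_binomial expn0 expr1 mul1r.
Qed.

End PermutationBinomial.

Theorem theorem1p4 (F : finFieldType) (q e r : nat) (a : F) :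
  prime_power q -> (2 <= e)%N -> #|F| = (q ^ e)%N -> (0 < r)%N -> a != 0 ->
  let l := (\sum_(i < e) q ^ i)%N in
  (permutes (fpoly q r a) /\ lin_binom_comp_monomial q e (fpoly q r a)) <->
  [/\ (- a) ^+ l != 1,
      exists h k s : nat,
        [/\ (0 < h)%N /\ coprime h e, (0 < k)%N /\ (k * h = 1 %[mod e])%N, (0 < s)%N &
            (r = s * l + \sum_(i < k) q ^ (h * i) %[mod q ^ e - 1])%N]
    & coprime r (q - 1)].
Proof.
move=> q_pp e_gt1 cardF r_gt0 a_nz l; have q_gt1 := prime_power_gt1 q_pp.
split=> [[perm_f comp_f] | [a_l form co_rq]].
  have := exp_shift_of_lin_comp q_gt1 e_gt1 cardF r_gt0 a_nz perm_f comp_f.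
  move=> /(exp_shiftP q_gt1 e_gt1) [form co_rq].
  by split=> //; exact: (neg_expr_neq1_of_permutes q_gt1 cardF r_gt0 a_nz perm_f).
have [h shift co_rN] := (exp_shiftP q_gt1 e_gt1 r).2 (conj form co_rq).
exact: (fpoly_lin_comp_of_exp_shift q_gt1 cardF q_pp r_gt0 a_l shift co_rN).
Qed.
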